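(* Let $A,B,C$ be non-zero integers and let $(x_0,y_0,z_0)$ be a non-trivial integer solution of $Ax^2+By^2+Cz^2=0$ with $z_0\neq0$. Define $$P_x(m,n)=x_0Am^2+2y_0Bmn-x_0Bn^2,\quad P_y(m,n)=-y_0Am^2+2x_0Amn+y_0Bn^2,\quad P_z(m,n)=z_0Am^2+z_0Bn^2.$$ Then every integer solution $(x,y,z)$ of $Ax^2+By^2+Cz^2=0$ can be written as $$(x,y,z)=\frac{p}{q}\big(P_x(m,n),P_y(m,n),P_z(m,n)\big)$$ with integers $m,n$ coprime, integers $p,q$ coprime, and $q>0$; moreover, in any such representation of an integer triple $(x,y,z)$ (with $\gcd(m,n)=\gcd(p,q)=1$, $q>0$), $q$ divides $2\,\mathrm{lcm}(A,B)\,C\,z_0^2$. *)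

From Stdlib Require Import ZArith.
Open Scope Z_scope.

Definition Px (A B x0 y0 z0 m n : Z) : Z := x0*A*m^2 + 2*y0*B*m*n - x0*B*n^2.
Definition Py (A B x0 y0 z0 m n : Z) : Z := -y0*A*m^2 + 2*x0*A*m*n + y0*B*n^2.
Definition Pz (A B x0 y0 z0 m n : Z) : Z := z0*A*m^2 + z0*B*n^2.

(* (x,y,z) = p/q (Px,Py,Pz)(m,n), written without division (q <> 0). *)
Definition represents (A B x0 y0 z0 x y z m n p q : Z) : Prop :=
  q * x = p * Px A B x0 y0 z0 m n /\
  q * y = p * Py A B x0 y0 z0 m n /\
  q * z = p * Pz A B x0 y0 z0 m n.

(* Existence: a solution (x,y,z) and the base solution (x0,y0,z0) span a line
   of the conic; evaluating the parametrization at the direction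
   (m,n) = (z0 x + x0 z, z0 y + y0 z) of that line returns (x,y,z) multiplied
   by 2 z0^2 (A x0 x + B y0 y - C z0 z), and this factor is nonzero because
   P(m,n) vanishes only at (m,n) = (0,0).  When that direction degenerates,
   (x,y,z) is proportional to (x0,y0,-z0) = P(B y0, -A x0) / (A B C z0^2).
   Divisibility: q divides P(m,n), and suitable combinations of the three
   forms eliminate to 2 A C z0^2 m^2 and 2 B C z0^2 n^2; as m and n are
   coprime, q divides 2 lcm(A,B) C z0^2. *)

From Stdlib Require Import ZArith Znumtheory Lia.
Open Scope Z_scope.

Lemma Z_coprime_decomposition (a b : Z) : ~ (a = 0 /\ b = 0) ->
  exists g a' b', g <> 0 /\ a = g * a' /\ b = g * b' /\ Z.gcd a' b' = 1.
Proof.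
  intros Hab.
  assert (Hg : Z.gcd a b <> 0) by (rewrite Z.gcd_eq_0; tauto).
  destruct (Z.gcd_divide_l a b) as [a' Ha].
  destruct (Z.gcd_divide_r a b) as [b' Hb].
  exists (Z.gcd a b), a', b'; split; [exact Hg|]; split; [lia|]; split; [lia|].
  rewrite <- (Z.div_mul a' (Z.gcd a b) Hg), <- (Z.div_mul b' (Z.gcd a b) Hg).
  rewrite <- Ha, <- Hb.
  now apply Z.gcd_div_gcd.
Qed.

Lemma Z_coprime_decomposition_pos (a b : Z) : b <> 0 ->
  exists g a' b', g <> 0 /\ a = g * a' /\ b = g * b' /\ Z.gcd a' b' = 1 /\ 0 < b'.
Proof.
  intros Hb.
  destruct (Z_coprime_decomposition a b) as (g & a' & b' & Hg & -> & -> & Hab');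
    [tauto|].
  destruct (Z_lt_le_dec 0 b') as [Hpos|Hneg].
  - now exists g, a', b'.
  - exists (- g), (- a'), (- b').
    rewrite Z.gcd_opp_l, Z.gcd_opp_r.
    assert (b' <> 0) by (intros ->; lia).
    repeat split; lia.
Qed.

Lemma Z_eq0_of_mul_pair (m n L : Z) : ~ (m = 0 /\ n = 0) ->
  m * L = 0 -> n * L = 0 -> L = 0.
Proof. intros Hmn Hm Hn; apply Z.mul_eq_0 in Hm, Hn; tauto. Qed.

Lemma Z_divide_of_divide_mul_coprime (q N a b : Z) :
  (q | N * a) -> (q | N * b) -> Z.gcd a b = 1 -> (q | N).
Proof.
  intros Ha Hb Hab.
  destruct (Z.gcd_bezout a b 1 Hab) as [u [v Huv]].
  replace N with (u * (N * a) + v * (N * b))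
    by (rewrite <- (Z.mul_1_r N) at 3; rewrite <- Huv; ring).
  apply Z.divide_add_r; apply Z.divide_mul_r; assumption.
Qed.

Lemma Z_gcd_sqr_coprime (m n : Z) : Z.gcd m n = 1 -> Z.gcd (m ^ 2) (n ^ 2) = 1.
Proof.
  rewrite !Zgcd_1_rel_prime, !Z.pow_2_r; intros Hmn.
  apply rel_prime_mult; apply rel_prime_sym, rel_prime_mult; apply rel_prime_sym; exact Hmn.
Qed.

Section Representation.

Variables A B x0 y0 z0 : Z.

Lemma represents_homogeneous (x y z g m n p q : Z) :
  represents A B x0 y0 z0 x y z (g*m) (g*n) p q ->
  represents A B x0 y0 z0 x y z m n (p*g^2) q.
Proof.
  unfold represents, Px, Py, Pz; intros (Ex & Ey & Ez).
  repeat split; [rewrite Ex | rewrite Ey | rewrite Ez]; ring.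
Qed.

Lemma represents_cancel (x y z m n h p q : Z) : h <> 0 ->
  represents A B x0 y0 z0 x y z m n (h*p) (h*q) ->
  represents A B x0 y0 z0 x y z m n p q.
Proof.
  unfold represents; intros Hh (Ex & Ey & Ez).
  repeat split; apply (Z.mul_cancel_l _ _ h Hh); rewrite Z.mul_assoc.
  - rewrite Ex; ring.
  - rewrite Ey; ring.
  - rewrite Ez; ring.
Qed.

Lemma represents_normalize (x y z c e r s : Z) : s <> 0 -> ~ (c = 0 /\ e = 0) ->
  represents A B x0 y0 z0 x y z c e r s ->
  exists m n p q : Z, Z.gcd m n = 1 /\ Z.gcd p q = 1 /\ 0 < q /\
    represents A B x0 y0 z0 x y z m n p q.
Proof.
  intros Hs Hce Hrep.
  destruct (Z_coprime_decomposition c e Hce) as (g & m & n & Hg & -> & -> & Hmn).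
  apply represents_homogeneous in Hrep.
  destruct (Z_coprime_decomposition_pos (r*g^2) s Hs) as (h & p & q & Hh & Hp & Hq & Hpq & Hq0).
  rewrite Hp, Hq in Hrep.
  exists m, n, p, q; split; [exact Hmn|]; split; [exact Hpq|]; split; [exact Hq0|].
  exact (represents_cancel _ _ _ _ _ h p q Hh Hrep).
Qed.

End Representation.

Section Parametrization.

Variables A B C x0 y0 z0 : Z.
Hypotheses (hA : A <> 0) (hB : B <> 0) (hC : C <> 0) (hz0 : z0 <> 0).
Hypothesis hsol0 : A*x0^2 + B*y0^2 + C*z0^2 = 0.

Lemma Cz0_sqr_neq0 : C * z0^2 <> 0.
Proof. apply Z.neq_mul_0; split; [exact hC | now apply Z.pow_nonzero]. Qed.

(* On the line W := A m^2 + B n^2 = 0, Px = 2 m L = 2 B n M and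
   Py = 2 n L = -2 A m M; so L = M = 0, a linear system in (m,n) whose
   determinant is -(A x0^2 + B y0^2) = C z0^2 <> 0. *)
Lemma P_not_all_zero (m n : Z) : ~ (m = 0 /\ n = 0) ->
  ~ (Px A B x0 y0 z0 m n = 0 /\ Py A B x0 y0 z0 m n = 0 /\ Pz A B x0 y0 z0 m n = 0).
Proof.
  intros Hmn (Hx & Hy & Hz).
  set (W := A*m^2 + B*n^2); set (L := A*x0*m + B*y0*n); set (M := y0*m - x0*n).
  assert (EW : z0 * W = Pz A B x0 y0 z0 m n) by (unfold W, Pz; ring).
  assert (ELm : 2*(m*L) = Px A B x0 y0 z0 m n + x0*W) by (unfold L, W, Px; ring).
  assert (ELn : 2*(n*L) = Py A B x0 y0 z0 m n + y0*W) by (unfold L, W, Py; ring).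
  assert (EMm : 2*A*(m*M) = y0*W - Py A B x0 y0 z0 m n) by (unfold M, W, Py; ring).
  assert (EMn : 2*B*(n*M) = Px A B x0 y0 z0 m n - x0*W) by (unfold M, W, Px; ring).
  assert (Km : C*z0^2*m = -(x0*L + B*y0*M)).
  { transitivity (-(A*x0^2 + B*y0^2)*m); [f_equal; clear - hsol0; lia | unfold L, M; ring]. }
  assert (Kn : C*z0^2*n = -(y0*L - A*x0*M)).
  { transitivity (-(A*x0^2 + B*y0^2)*n); [f_equal; clear - hsol0; lia | unfold L, M; ring]. }
  clearbody W L M; rewrite Hx, Hy, Hz in *.
  assert (HW : W = 0) by (apply Z.mul_eq_0 in EW; tauto).
  subst W.
  rewrite Z.mul_0_r, Z.sub_0_r in EMm; rewrite Z.mul_0_r, Z.sub_0_r in EMn.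
  assert (HL : L = 0)
    by (apply (Z_eq0_of_mul_pair m n); [exact Hmn | clear - ELm; lia | clear - ELn; lia]).
  assert (HM : M = 0).
  { apply (Z_eq0_of_mul_pair m n); [exact Hmn | |].
    - apply Z.mul_eq_0 in EMm as [E|E]; [clear - hA E; lia | exact E].
    - apply Z.mul_eq_0 in EMn as [E|E]; [clear - hB E; lia | exact E]. }
  subst L M.
  apply Cz0_sqr_neq0, (Z_eq0_of_mul_pair m n);
    [exact Hmn | rewrite Z.mul_comm, Km | rewrite Z.mul_comm, Kn]; ring.
Qed.

Lemma represents_chord (x y z : Z) : A*x^2 + B*y^2 + C*z^2 = 0 ->
  represents A B x0 y0 z0 x y z (z0*x + x0*z) (z0*y + y0*z)
    1 (2*z0^2*(A*x0*x + B*y0*y - C*z0*z)).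
Proof.
  intros Hs; unfold represents; set (K := A*x0*x + B*y0*y - C*z0*z).
  split; [|split].
  - transitivity (2*z0^2*K*x + (2*z0*z*x + x0*z^2)*(A*x0^2 + B*y0^2 + C*z0^2)
                  - x0*z0^2*(A*x^2 + B*y^2 + C*z^2)).
    + rewrite hsol0, Hs; ring.
    + unfold K, Px; ring.
  - transitivity (2*z0^2*K*y + (2*z0*z*y + y0*z^2)*(A*x0^2 + B*y0^2 + C*z0^2)
                  - y0*z0^2*(A*x^2 + B*y^2 + C*z^2)).
    + rewrite hsol0, Hs; ring.
    + unfold K, Py; ring.
  - transitivity (2*z0^2*K*z + z0*z^2*(A*x0^2 + B*y0^2 + C*z0^2)
                  + z0^3*(A*x^2 + B*y^2 + C*z^2)).
    + rewrite hsol0, Hs; ring.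
    + unfold K, Pz; ring.
Qed.

Lemma represents_tangent (x y z : Z) : z0*x + x0*z = 0 -> z0*y + y0*z = 0 ->
  represents A B x0 y0 z0 x y z (B*y0) (-(A*x0)) (-z) (A*B*C*z0^3).
Proof.
  intros Hx Hy; unfold represents; split; [|split]; apply Z.sub_move_0_r.
  - transitivity (A*B*C*z0^2*(z0*x + x0*z) - z*A*B*x0*(A*x0^2 + B*y0^2 + C*z0^2)).
    + unfold Px; ring.
    + rewrite Hx, hsol0; ring.
  - transitivity (A*B*C*z0^2*(z0*y + y0*z) - z*A*B*y0*(A*x0^2 + B*y0^2 + C*z0^2)).
    + unfold Py; ring.
    + rewrite Hy, hsol0; ring.
  - transitivity (z*A*B*z0*(A*x0^2 + B*y0^2 + C*z0^2)).
    + unfold Pz; ring.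
    + rewrite hsol0; ring.
Qed.

Lemma solution_represented_chord (x y z : Z) : A*x^2 + B*y^2 + C*z^2 = 0 ->
  ~ (z0*x + x0*z = 0 /\ z0*y + y0*z = 0) ->
  exists m n p q : Z, Z.gcd m n = 1 /\ Z.gcd p q = 1 /\ 0 < q /\
    represents A B x0 y0 z0 x y z m n p q.
Proof.
  intros Hs Hce.
  pose proof (represents_chord x y z Hs) as Hrep.
  eapply represents_normalize; [| exact Hce | exact Hrep].
  intros Hq; apply (P_not_all_zero _ _ Hce).
  destruct Hrep as (Ex & Ey & Ez); rewrite Hq, Z.mul_0_l, Z.mul_1_l in Ex, Ey, Ez.
  auto.
Qed.

Lemma solution_represented_tangent (x y z : Z) :
  z0*x + x0*z = 0 -> z0*y + y0*z = 0 ->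
  exists m n p q : Z, Z.gcd m n = 1 /\ Z.gcd p q = 1 /\ 0 < q /\
    represents A B x0 y0 z0 x y z m n p q.
Proof.
  intros Hx Hy.
  eapply represents_normalize; [| | exact (represents_tangent x y z Hx Hy)].
  - apply Z.neq_mul_0; split; [| now apply Z.pow_nonzero].
    repeat (apply Z.neq_mul_0; split); assumption.
  - intros [Hy0 Hx0]; apply Cz0_sqr_neq0.
    apply Z.mul_eq_0 in Hy0 as [|Hy0]; [contradiction|].
    rewrite Z.eq_opp_l, Z.opp_0 in Hx0; apply Z.mul_eq_0 in Hx0 as [|Hx0]; [contradiction|].
    subst x0 y0; rewrite <- hsol0; ring.
Qed.

Lemma solution_represented (x y z : Z) : A*x^2 + B*y^2 + C*z^2 = 0 ->
  exists m n p q : Z, Z.gcd m n = 1 /\ Z.gcd p q = 1 /\ 0 < q /\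
    represents A B x0 y0 z0 x y z m n p q.
Proof.
  intros Hs.
  destruct (Z.eq_dec (z0*x + x0*z) 0), (Z.eq_dec (z0*y + y0*z) 0);
    [now apply solution_represented_tangent | apply solution_represented_chord; tauto ..].
Qed.

Lemma P_combination_m2 (m n : Z) :
  2*A*C*z0^2*m^2
  = -A*x0*Px A B x0 y0 z0 m n + B*y0*Py A B x0 y0 z0 m n + C*z0*Pz A B x0 y0 z0 m n.
Proof.
  transitivity (-A*x0*Px A B x0 y0 z0 m n + B*y0*Py A B x0 y0 z0 m n
                + C*z0*Pz A B x0 y0 z0 m n - (B*n^2 - A*m^2)*(A*x0^2 + B*y0^2 + C*z0^2)).
  - unfold Px, Py, Pz; ring.
  - rewrite hsol0; ring.
Qed.

Lemma P_combination_n2 (m n : Z) :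
  2*B*C*z0^2*n^2
  = A*x0*Px A B x0 y0 z0 m n - B*y0*Py A B x0 y0 z0 m n + C*z0*Pz A B x0 y0 z0 m n.
Proof.
  transitivity (A*x0*Px A B x0 y0 z0 m n - B*y0*Py A B x0 y0 z0 m n
                + C*z0*Pz A B x0 y0 z0 m n + (B*n^2 - A*m^2)*(A*x0^2 + B*y0^2 + C*z0^2)).
  - unfold Px, Py, Pz; ring.
  - rewrite hsol0; ring.
Qed.

Lemma represents_denominator_divide (x y z m n p q : Z) :
  Z.gcd m n = 1 -> Z.gcd p q = 1 ->
  represents A B x0 y0 z0 x y z m n p q -> (q | 2 * Z.lcm A B * C * z0^2).
Proof.
  intros Hmn Hpq (Ex & Ey & Ez).
  rewrite Z.gcd_comm in Hpq.
  assert (Dx : (q | Px A B x0 y0 z0 m n))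
    by (apply (Z.gauss q p); [rewrite <- Ex; apply Z.divide_factor_l | exact Hpq]).
  assert (Dy : (q | Py A B x0 y0 z0 m n))
    by (apply (Z.gauss q p); [rewrite <- Ey; apply Z.divide_factor_l | exact Hpq]).
  assert (Dz : (q | Pz A B x0 y0 z0 m n))
    by (apply (Z.gauss q p); [rewrite <- Ez; apply Z.divide_factor_l | exact Hpq]).
  assert (Dm : (q | 2*A*C*z0^2*m^2)).
  { rewrite (P_combination_m2 m n).
    repeat (apply Z.divide_sub_r || apply Z.divide_add_r); apply Z.divide_mul_r; assumption. }
  assert (Dn : (q | 2*B*C*z0^2*n^2)).
  { rewrite (P_combination_n2 m n).
    repeat (apply Z.divide_sub_r || apply Z.divide_add_r); apply Z.divide_mul_r; assumption. }
  apply (Z_divide_of_divide_mul_coprime q _ (m^2) (n^2)); [| | now apply Z_gcd_sqr_coprime].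
  - apply (Z.divide_trans _ _ _ Dm).
    replace (2*A*C*z0^2*m^2) with (A*(2*C*z0^2*m^2)) by ring.
    replace (2 * Z.lcm A B * C * z0^2 * m^2) with (Z.lcm A B * (2*C*z0^2*m^2)) by ring.
    apply Z.mul_divide_mono_r, Z.divide_lcm_l.
  - apply (Z.divide_trans _ _ _ Dn).
    replace (2*B*C*z0^2*n^2) with (B*(2*C*z0^2*n^2)) by ring.
    replace (2 * Z.lcm A B * C * z0^2 * n^2) with (Z.lcm A B * (2*C*z0^2*n^2)) by ring.
    apply Z.mul_divide_mono_r, Z.divide_lcm_r.
Qed.

End Parametrization.

Theorem theorem5 (A B C x0 y0 z0 : Z)
  (hA : A <> 0) (hB : B <> 0) (hC : C <> 0)
  (hsol0 : A*x0^2 + B*y0^2 + C*z0^2 = 0)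
  (hnt : ~ (x0 = 0 /\ y0 = 0 /\ z0 = 0)) (hz0 : z0 <> 0) :
  (forall x y z : Z, A*x^2 + B*y^2 + C*z^2 = 0 ->
     exists m n p q : Z, Z.gcd m n = 1 /\ Z.gcd p q = 1 /\ 0 < q /\
       represents A B x0 y0 z0 x y z m n p q)
  /\
  (forall x y z m n p q : Z, Z.gcd m n = 1 -> Z.gcd p q = 1 -> 0 < q ->
     represents A B x0 y0 z0 x y z m n p q ->
     (q | 2 * Z.lcm A B * C * z0^2)).
Proof.
  split.
  - intros x y z; exact (solution_represented A B C x0 y0 z0 hA hB hC hz0 hsol0 x y z).
  - intros x y z m n p q Hmn Hpq _.
    exact (represents_denominator_divide A B C x0 y0 z0 hsol0 x y z m n p q Hmn Hpq).
Qed.
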